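(* Let $D$ be a rooted hyperbolic digraph with constant out-degree and bounded in-degree. Then every elliptic self-embedding of $D$ is an automorphism of $D$.
   Context: A directed path $x_0\ldots x_n$ has edges $x_ix_{i+1}$; $d(x,y)$ is the length of a shortest directed $x$-$y$ path ($\infty$ if none), called an $x$-$y$ geodesic. $D$ is rooted if some vertex $o$ satisfies $d(o,v)<\infty$ for all $v$. $\mathcal{B}^+_k(x)=\{y:d(x,y)\le k\}$, $\mathcal{B}^-_k(x)=\{y:d(y,x)\le k\}$, extended to sets by unions. A geodesic triangle consists of three vertices and for each pair a geodesic between them (in one direction); it is $\delta$-thin if whenever $P,Q,R$ are its sides with the start of $P$ being the start or end of $Q$ and the end of $P$ being the start or end of $R$, $P\subseteq\mathcal{B}^+_\delta(Q)\cup\mathcal{B}^-_\delta(R)$; $D$ is hyperbolic if for some $\delta\ge0$ all geodesic triangles are $\delta$-thin. A self-embedding is an injective $g:V(D)\to V(D)$ with $xy\in E(D)\iff g(x)g(y)\in E(D)$; it is elliptic if $g(F)=F$ for some nonempty finite vertex set $F$. An automorphism is a bijective self-embedding. *)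

From Stdlib Require Import List Arith.
Import ListNotations.

Section Digraph.
Context {V : Type} (E : V -> V -> Prop).

Definition is_walk (f : nat -> V) (n : nat) : Prop :=
  forall i, i < n -> E (f i) (f (S i)).

Definition walk_len (x y : V) (n : nat) : Prop :=
  exists f, is_walk f n /\ f 0 = x /\ f n = y.

Definition dist_le (x y : V) (k : nat) : Prop :=
  exists n, n <= k /\ walk_len x y n.

Record dpath := DPath { plen : nat ; pfun : nat -> V }.

Definition pstart (P : dpath) : V := pfun P 0.
Definition pend (P : dpath) : V := pfun P (plen P).
Definition on_path (v : V) (P : dpath) : Prop :=
  exists i, i <= plen P /\ pfun P i = v.

Definition geodesic (x y : V) (P : dpath) : Prop :=
  is_walk (pfun P) (plen P) /\ pstart P = x /\ pend P = y /\
  forall m, walk_len x y m -> plen P <= m.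

Definition geodesic_between (a b : V) (P : dpath) : Prop :=
  geodesic a b P \/ geodesic b a P.

Definition geodesic_triangle (a b c : V) (P1 P2 P3 : dpath) : Prop :=
  geodesic_between a b P1 /\ geodesic_between b c P2 /\ geodesic_between a c P3.

Definition out_ball_path (d : nat) (Q : dpath) (v : V) : Prop :=
  exists q, on_path q Q /\ dist_le q v d.
Definition in_ball_path (d : nat) (R : dpath) (v : V) : Prop :=
  exists r, on_path r R /\ dist_le v r d.

Definition thin_cond (d : nat) (P Q R : dpath) : Prop :=
  (pstart P = pstart Q \/ pstart P = pend Q) ->
  (pend P = pstart R \/ pend P = pend R) ->
  forall v, on_path v P -> out_ball_path d Q v \/ in_ball_path d R v.

(* all role assignments (P,Q,R) of the three sides *)
Definition thin_triangle (d : nat) (P1 P2 P3 : dpath) : Prop :=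
  thin_cond d P1 P2 P3 /\ thin_cond d P1 P3 P2 /\
  thin_cond d P2 P1 P3 /\ thin_cond d P2 P3 P1 /\
  thin_cond d P3 P1 P2 /\ thin_cond d P3 P2 P1.

Definition hyperbolic : Prop :=
  exists d : nat, forall a b c P1 P2 P3,
    geodesic_triangle a b c P1 P2 P3 -> thin_triangle d P1 P2 P3.

Definition rooted : Prop :=
  exists o : V, forall v, exists n, walk_len o v n.

Definition constant_out_degree : Prop :=
  exists k : nat, forall x, exists l : list V,
    NoDup l /\ length l = k /\ forall y, In y l <-> E x y.

Definition bounded_in_degree : Prop :=
  exists N : nat, forall y, exists l : list V,
    length l <= N /\ forall x, E x y -> In x l.

Definition self_embedding (g : V -> V) : Prop :=
  (forall x y, g x = g y -> x = y) /\
  (forall x y, E x y <-> E (g x) (g y)).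

(* g(F) = F for some nonempty finite F *)
Definition elliptic (g : V -> V) : Prop :=
  exists F : list V, F <> [] /\
    forall v, In v F <-> exists u, In u F /\ g u = v.

Definition automorphism (g : V -> V) : Prop :=
  self_embedding g /\ forall y, exists x, g x = y.

End Digraph.

(* Constant out-degree and injectivity force the image of a self-embedding g
   to be closed under out-neighbours, hence under reachability. If g(F) = F,
   the set of vertices at in-distance at most r from F is finite (bounded
   in-degree) and mapped into itself by g, so g restricts to a bijection of
   it; with r = d(o, F) this puts the root o in the image, and then every
   vertex is in the image. *)
From Stdlib Require Import List Lia FinFun Classical.
Import ListNotations.

Lemma incl_map_injective_NoDup {A B : Type} (g : A -> B) (l : list A) (l' : list B) :
  Injective g -> NoDup l -> length l' <= length l -> incl (map g l) l' ->
  incl l' (map g l).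
Proof.
  intros Hinj Hl Hlen Hincl.
  apply NoDup_length_incl; [now apply Injective_map_NoDup | now rewrite length_map | exact Hincl].
Qed.

Lemma NoDup_listing_of_incl {A : Type} (L : list A) : forall S : A -> Prop,
  (forall x, S x -> In x L) -> exists l, NoDup l /\ forall x, In x l <-> S x.
Proof.
  induction L as [|a L IH]; intros S HS.
  - exists []. split; [constructor|]. intros x; split; [intros []|].
    intros Hx. destruct (HS x Hx).
  - destruct (IH (fun x => S x /\ x <> a)) as [l [Hnd Hl]].
    { intros x [Hx Hne]. destruct (HS x Hx); [congruence | assumption]. }
    destruct (classic (S a)) as [Ha | Ha].
    + exists (a :: l). split.
      * constructor; [rewrite Hl; tauto | exact Hnd].
      * intros x; split.
        -- intros [<- | Hx]; [exact Ha | apply Hl, Hx].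
        -- intros Hx. destruct (classic (x = a)) as [-> | Hne]; [now left | right].
           apply Hl; auto.
    + exists l. split; [exact Hnd|]. intros x. rewrite Hl.
      split; [tauto|]. intros Hx. split; [exact Hx|]. intros ->; contradiction.
Qed.

Lemma injective_surj_on_finite {A : Type} (S : A -> Prop) (L : list A) (g : A -> A) :
  (forall x, S x -> In x L) -> Injective g -> (forall x, S x -> S (g x)) ->
  forall y, S y -> exists x, S x /\ g x = y.
Proof.
  intros HL Hinj Hstable y Hy.
  destruct (NoDup_listing_of_incl L S HL) as [l [Hnd Hl]].
  assert (Hsurj : incl l (map g l)).
  { apply incl_map_injective_NoDup; [exact Hinj | exact Hnd | lia |].
    intros z Hz. apply in_map_iff in Hz as [x [<- Hx]].
    apply Hl, Hstable, Hl, Hx. }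
  apply Hl, Hsurj in Hy.
  apply in_map_iff in Hy as [x [Hgx Hx]].
  exists x. split; [apply Hl, Hx | exact Hgx].
Qed.

Section Digraph.
Context {V : Type} (E : V -> V -> Prop).

Lemma walk_len_0_eq x y : walk_len E x y 0 -> x = y.
Proof. intros [f [_ [H0 H1]]]. congruence. Qed.

Lemma walk_len_S_inv x y m :
  walk_len E x y (S m) -> exists w, E x w /\ walk_len E w y m.
Proof.
  intros [f [Hw [H0 Hn]]]. exists (f 1). split.
  - rewrite <- H0. apply Hw. lia.
  - exists (fun i => f (S i)). split; [|split; [reflexivity | exact Hn]].
    intros i Hi. apply Hw. lia.
Qed.

Lemma self_embedding_walk_len g x y n :
  self_embedding E g -> walk_len E x y n -> walk_len E (g x) (g y) n.
Proof.
  intros [_ Hemb] [f [Hw [H0 Hn]]]. exists (fun i => g (f i)).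
  split; [|split; congruence]. intros i Hi. apply (proj1 (Hemb _ _)), Hw, Hi.
Qed.

Lemma in_neighbours_finite : bounded_in_degree E -> forall L : list V,
  exists L', forall x y, In y L -> E x y -> In x L'.
Proof.
  intros [N HN] L. induction L as [|a L [L' IH]].
  - exists []. intros x y [].
  - destruct (HN a) as [la [_ Hla]]. exists (la ++ L').
    intros x y [<- | Hy] Hxy; apply in_or_app; eauto.
Qed.

Lemma in_ball_finite : bounded_in_degree E -> forall (F : list V) r,
  exists L, forall v u, In u F -> dist_le E v u r -> In v L.
Proof.
  intros Hb F r. induction r as [|r [L IH]].
  - exists F. intros v u Hu [n [Hn Hw]].
    replace n with 0 in Hw by lia. now rewrite (walk_len_0_eq _ _ Hw).
  - destruct (in_neighbours_finite Hb L) as [L' HL']. exists (L ++ L').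
    intros v u Hu [[|m] [Hn Hw]]; apply in_or_app.
    + left. apply (IH v u Hu). exists 0. split; [lia | exact Hw].
    + right. apply walk_len_S_inv in Hw as [w [Hvw Hw]].
      apply (HL' v w); [|exact Hvw]. apply (IH w u Hu). exists m. split; [lia | exact Hw].
Qed.

Lemma self_embedding_image_out_closed g a y :
  constant_out_degree E -> self_embedding E g -> E (g a) y -> exists x, g x = y.
Proof.
  intros [k Hk] [Hinj Hemb] Hy.
  destruct (Hk a) as [la [Hnda [Hlena Hla]]].
  destruct (Hk (g a)) as [lb [_ [Hlenb Hlb]]].
  assert (Hsurj : incl lb (map g la)).
  { apply incl_map_injective_NoDup; [exact Hinj | exact Hnda | lia |].
    intros z Hz. apply in_map_iff in Hz as [x [<- Hx]].
    apply Hlb, (proj1 (Hemb _ _)), Hla, Hx. }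
  apply Hlb, Hsurj in Hy.
  apply in_map_iff in Hy as [x [Hx _]]. now exists x.
Qed.

Lemma self_embedding_image_walk_closed g n : forall x y,
  constant_out_degree E -> self_embedding E g -> walk_len E x y n ->
  (exists a, g a = x) -> exists a, g a = y.
Proof.
  induction n as [|n IH]; intros x y Hk Hg Hw Hx.
  - now rewrite <- (walk_len_0_eq _ _ Hw).
  - apply walk_len_S_inv in Hw as [w [Hxw Hw]].
    apply (IH w y Hk Hg Hw). destruct Hx as [a <-].
    exact (self_embedding_image_out_closed g a w Hk Hg Hxw).
Qed.

Lemma elliptic_image_contains_walks_to_orbit g F :
  bounded_in_degree E -> self_embedding E g ->
  (forall v, In v F <-> exists u, In u F /\ g u = v) ->
  forall v u n, In u F -> walk_len E v u n -> exists x, g x = v.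
Proof.
  intros Hb Hg HF v u n Hu Hvu.
  set (ball := fun x => exists u, In u F /\ dist_le E x u n).
  destruct (in_ball_finite Hb F n) as [L HL].
  assert (Hstable : forall x, ball x -> ball (g x)).
  { intros x [w [Hw [m [Hm Hxw]]]]. exists (g w). split.
    - apply HF. now exists w.
    - exists m. split; [exact Hm | now apply self_embedding_walk_len]. }
  destruct (injective_surj_on_finite ball L g) with (y := v) as [x [_ Hx]].
  - intros x [w [Hw Hxw]]. exact (HL x w Hw Hxw).
  - exact (proj1 Hg).
  - exact Hstable.
  - exists u. split; [exact Hu|]. exists n. split; [lia | exact Hvu].
  - now exists x.
Qed.

End Digraph.

Theorem corollary3p15 (V : Type) (E : V -> V -> Prop) :
  rooted E -> hyperbolic E -> constant_out_degree E -> bounded_in_degree E ->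
  forall g : V -> V, self_embedding E g -> elliptic g -> automorphism E g.
Proof.
  intros [o Ho] _ Hk Hb g Hg [F [HFne HF]].
  split; [exact Hg|].
  destruct F as [|f F]; [contradiction|].
  destruct (Ho f) as [r Hof].
  assert (Ho_img : exists a, g a = o)
    by exact (elliptic_image_contains_walks_to_orbit E g (f :: F) Hb Hg HF o f r
                (or_introl eq_refl) Hof).
  intros y. destruct (Ho y) as [n Hoy].
  exact (self_embedding_image_walk_closed E g n o y Hk Hg Hoy Ho_img).
Qed.
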